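(* For every integer $x\geq 3$ and each $i\in[1,8]$, there exists a $D_i$-decomposition of $K^*_{(2x+1)\times 7}$.
   Context: For a simple graph $G$, $G^*$ is the digraph with vertex set $V(G)$ and arc set $\bigcup_{\{x,y\}\in E(G)}\{(x,y),(y,x)\}$. $K_{r\times s}$ is the complete multipartite simple graph with $r$ parts each of size $s$, and $K^*_{r\times s}=(K_{r\times s})^*$. A $D$-decomposition of a digraph $K$ is a set of subdigraphs of $K$, each isomorphic to $D$, such that every arc of $K$ lies in exactly one of them. For distinct vertices $v_0,\dots,v_6$, the digraphs $D_i[v_0,v_1,\dots,v_6]$ ($i\in[1,8]$) all have vertex set $\{v_0,\dots,v_6\}$ and the following arc sets: $D_1$: $(v_1,v_0),(v_1,v_2),(v_2,v_3),(v_3,v_4),(v_4,v_5),(v_5,v_6),(v_6,v_0)$; $D_2$: $(v_1,v_0),(v_2,v_1),(v_2,v_3),(v_3,v_4),(v_4,v_5),(v_5,v_6),(v_6,v_0)$; $D_3$: $(v_1,v_0),(v_1,v_2),(v_3,v_2),(v_3,v_4),(v_4,v_5),(v_5,v_6),(v_6,v_0)$; $D_4$: $(v_1,v_0),(v_1,v_2),(v_2,v_3),(v_4,v_3),(v_4,v_5),(v_5,v_6),(v_6,v_0)$; $D_5$: $(v_1,v_0),(v_2,v_1),(v_3,v_2),(v_3,v_4),(v_4,v_5),(v_5,v_6),(v_6,v_0)$; $D_6$: $(v_1,v_0),(v_2,v_1),(v_2,v_3),(v_3,v_4),(v_5,v_4),(v_5,v_6),(v_6,v_0)$; $D_7$: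 $(v_1,v_0),(v_1,v_2),(v_3,v_2),(v_3,v_4),(v_4,v_5),(v_6,v_5),(v_6,v_0)$; $D_8$: $(v_1,v_0),(v_2,v_1),(v_2,v_3),(v_4,v_3),(v_4,v_5),(v_5,v_6),(v_6,v_0)$. $D_i$ also denotes the isomorphism type of $D_i[v_0,\dots,v_6]$. *)

From mathcomp Require Import all_boot.
Set Implicit Arguments. Unset Strict Implicit. Unset Printing Implicit Defensive.

(* Vertex set of K_{r x s}: part index * position in part. *)
Definition mpV (r s : nat) : Type := prod (ordinal r) (ordinal s).

Definition Kmp (r s : nat) : rel (mpV r s : finType) := fun u v => u.1 != v.1.

(* Arc relation of G^* for a simple graph G given by a symmetric
   irreflexive adjacency relation: (x,y) is an arc iff {x,y} is an edge. *)
Definition star (V : finType) (e : rel V) : rel V := fun x y => e x y.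

Definition Kstar (r s : nat) : rel (mpV r s : finType) := star (@Kmp r s).

(* Arcs of D_i[v_0,...,v_6], as pairs of indices into (v_0,...,v_6). *)
Definition ar (a b : nat) : 'I_7 * 'I_7 := (inord a, inord b).

Definition D_arcs (i : nat) : seq ('I_7 * 'I_7) :=
  match i with
  | 1 => [:: ar 1 0; ar 1 2; ar 2 3; ar 3 4; ar 4 5; ar 5 6; ar 6 0]
  | 2 => [:: ar 1 0; ar 2 1; ar 2 3; ar 3 4; ar 4 5; ar 5 6; ar 6 0]
  | 3 => [:: ar 1 0; ar 1 2; ar 3 2; ar 3 4; ar 4 5; ar 5 6; ar 6 0]
  | 4 => [:: ar 1 0; ar 1 2; ar 2 3; ar 4 3; ar 4 5; ar 5 6; ar 6 0]
  | 5 => [:: ar 1 0; ar 2 1; ar 3 2; ar 3 4; ar 4 5; ar 5 6; ar 6 0]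
  | 6 => [:: ar 1 0; ar 2 1; ar 2 3; ar 3 4; ar 5 4; ar 5 6; ar 6 0]
  | 7 => [:: ar 1 0; ar 1 2; ar 3 2; ar 3 4; ar 4 5; ar 6 5; ar 6 0]
  | 8 => [:: ar 1 0; ar 2 1; ar 2 3; ar 4 3; ar 4 5; ar 5 6; ar 6 0]
  | _ => [::]
  end.

(* A copy of a pattern digraph on vertices 'I_n (every vertex of which lies
   on an arc, as for each D_i) inside a digraph on V is given by an
   injective labelling f : 'I_n -> V (f k = v_k); its arcs are the images
   (f a, f b) of the pattern arcs (a, b).
   A D-decomposition of the digraph K (arc relation K on V) is a collection
   of such copies such that every arc of K lies in exactly one copy, and
   no copy contains a non-arc of K: for every ordered pair (u,v), the total
   number of copy-arcs equal to (u,v) is 1 if (u,v) is an arc of K and 0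
   otherwise. (Copies are therefore pairwise distinct subdigraphs.) *)
Definition copy_arc_count (V : finType) (n : nat) (D : seq ('I_n * 'I_n))
  (f : {ffun 'I_n -> V}) (u v : V) : nat :=
  count (fun a : 'I_n * 'I_n => (f a.1 == u) && (f a.2 == v)) D.

Definition is_decomposition (V : finType) (K : rel V) (n : nat)
  (D : seq ('I_n * 'I_n)) (copies : seq {ffun 'I_n -> V}) : Prop :=
  all (fun f : {ffun 'I_n -> V} => injectiveb f) copies /\
  (forall u v : V,
     \sum_(f <- copies) copy_arc_count D f u v = (K u v : nat)).

Definition has_decomposition (V : finType) (K : rel V) (n : nat)
  (D : seq ('I_n * 'I_n)) : Prop :=
  exists copies : seq {ffun 'I_n -> V}, is_decomposition K D copies.

(* Identify the parts of K_{m x s} (m odd) with Z_m and the positions inside a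
   part with Z_s.  Label each vertex j of the pattern D by (P j, Q j) in Z x Z_s
   such that the arcs of D join vertices whose P-labels differ by a power of 2,
   and the Q-differences of the arcs run through Z_s exactly once.  The copies
   j |-> (t1 + y P j, t2 + Q j), for y <> 0 in Z_m and (t1, t2) arbitrary, then
   decompose K*_{m x s}: an arc (u, v) fixes the pattern arc by v2 - u2, then y
   because multiplication by a power of 2 is invertible modulo an odd m, and
   finally the translation (t1, t2).  Each copy is injective as soon as vertices
   with equal Q-labels also have P-labels differing by a power of 2. *)

From mathcomp Require Import all_boot all_algebra.
Set Implicit Arguments. Unset Strict Implicit. Unset Printing Implicit Defensive.
Import GRing.Theory.
Local Open Scope ring_scope.

Lemma mulrz_Zp_inj n (c : int) : coprime `|c| n.+1 ->
  injective (fun y : 'I_n.+1 => y *~ c).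
Proof.
move=> c_coprime y z /eqP; rewrite -subr_eq0 -mulrzBl => /eqP.
move=> yzc0; apply/eqP; rewrite -subr_eq0; apply/eqP; move: (y - z) yzc0 => w wc0.
have {wc0} : w *+ `|c| = 0.
  by case: c {c_coprime} wc0 => m /= /eqP; rewrite ?oppr_eq0 => /eqP.
move/(congr1 val); rewrite Zp_mulrn /= => /eqP.
rewrite -/(dvdn _ _) Gauss_dvdl 1?coprime_sym // => /dvdn_leq w_ge; apply/val_inj => /=.
by case: (val w) (ltn_ord w) w_ge => //= m; rewrite ltnNge => /negP + /(_ isT).
Qed.

Lemma sum_translate_pair (T : finZmodType) (a b u v : T) :
  (\sum_t ((t + a == u)%R && (t + b == v)%R))%N = (b - a == v - u).
Proof.
rewrite (bigD1 (u - a)) //= subrK eqxx big1 ?addn0 => [|t t_neq].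
  by rewrite addrAC -addrA addrC [b - a == _]eq_sym subr_eq eq_sym.
by case: eqP => // ta; case/eqP: t_neq; rewrite -ta addrK.
Qed.

Lemma sum_nonzero_preimage (T : finZmodType) (g : T -> T) (d : T) :
  injective g -> g 0 = 0 -> (\sum_(y | y != 0%R) (g y == d))%N = (d != 0).
Proof.
move=> g_inj g0; have [->|d_neq0] := eqVneq d 0.
  by rewrite big1 // => y y_neq0; rewrite -g0 (inj_eq g_inj) (negbTE y_neq0).
have /codomP[y0 d_def] : d \in codom g := inj_card_onto g_inj (leqnn _) d.
rewrite {d}d_def in d_neq0 *.
have y0_neq0 : y0 != 0 by apply: contraNneq d_neq0 => ->; rewrite g0.
rewrite (bigD1 y0) //= eqxx big1 // => y /andP[_ y_neq].
by rewrite (inj_eq g_inj) (negbTE y_neq).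
Qed.

Lemma sum_pair_andb (I J : finType) (a : pred I) (b : pred J) :
  (\sum_(t : I * J) (a t.1 && b t.2))%N = ((\sum_i a i) * (\sum_j b j))%N.
Proof.
rewrite -(pair_bigA _ (fun i j => (a i && b j : nat))) big_distrlr /=.
by apply: eq_bigr => i _; apply: eq_bigr => j _; rewrite mulnb.
Qed.

Lemma sum_bool_count (T : Type) (a : pred T) (s : seq T) :
  (\sum_(x <- s) a x)%N = count a s.
Proof. by rewrite -sum1_count [RHS]big_mkcond. Qed.

Definition cyclic_labelling k s (D : seq ('I_k * 'I_k)) (P : 'I_k -> int)
    (Q : 'I_k -> 'I_s.+1) : bool :=
  [&& all (fun a => 2%N.-nat `|P a.2 - P a.1|%N) D,
      all (fun d => count (fun a => Q a.2 - Q a.1 == d) D == 1%N) (enum 'I_s.+1)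
    & all (fun j => all (fun l => (j != l) && (Q j == Q l) ==> 2%N.-nat `|P l - P j|%N)
                        (enum 'I_k)) (enum 'I_k)].

Section CyclicDevelopment.

Variables (n s k : nat) (D : seq ('I_k * 'I_k)).
Variables (P : 'I_k -> int) (Q : 'I_k -> 'I_s.+1).
Hypothesis n_odd : odd n.+1.
Hypothesis labelling : cyclic_labelling D P Q.

Lemma coprime_2nat c : 2%N.-nat c -> coprime c n.+1.
Proof. by move/pnat_coprime; apply; rewrite -odd_2'nat. Qed.

Definition develop (y : 'I_n.+1) (t : mpV n.+1 s.+1) : {ffun 'I_k -> mpV n.+1 s.+1} :=
  [ffun j => (t.1 + y *~ P j, t.2 + Q j)].

Definition developments : seq {ffun 'I_k -> mpV n.+1 s.+1} :=
  [seq develop p.1 p.2 | p <- enum [pred p : 'I_n.+1 * mpV n.+1 s.+1 | p.1 != 0]].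

Lemma develop_inj y t : y != 0 -> injective (develop y t).
Proof.
move=> y_neq0 j l; rewrite !ffunE => jl_eq.
have /addrI Pjl := congr1 fst jl_eq; have /addrI Qjl := congr1 snd jl_eq.
apply/eqP; apply: contraNT y_neq0 => j_neq_l.
case/and3P: labelling => _ _ /allP/(_ j (mem_enum _ j))/allP/(_ l (mem_enum _ l)).
rewrite j_neq_l Qjl eqxx => /coprime_2nat/mulrz_Zp_inj c_inj.
by apply/eqP/c_inj; rewrite mulrzBr Pjl subrr mul0rz.
Qed.

Lemma develop_arc_count (a : 'I_k * 'I_k) (u v : mpV n.+1 s.+1) :
  2%N.-nat `|P a.2 - P a.1|%N ->
  (\sum_(y | y != 0%R) \sum_t ((develop y t a.1 == u) && (develop y t a.2 == v)))%N
  = (u.1 != v.1) && (Q a.2 - Q a.1 == v.2 - u.2).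
Proof.
case: u v => [u1 u2] [v1 v2] /coprime_2nat/mulrz_Zp_inj dP_inj /=.
under eq_bigr => y _.
  under eq_bigr => t _ do rewrite !ffunE !xpair_eqE andbACA.
  rewrite (sum_pair_andb (fun t1 => (t1 + y *~ P a.1 == u1) && (t1 + y *~ P a.2 == v1))
                        (fun t2 => (t2 + Q a.1 == u2) && (t2 + Q a.2 == v2))).
  rewrite !sum_translate_pair -mulrzBr.
  over.
rewrite -big_distrl /= (sum_nonzero_preimage _ dP_inj (mul0rz _ _)).
by rewrite subr_eq0 eq_sym mulnb.
Qed.

Lemma developments_arc_count (u v : mpV n.+1 s.+1) :
  (\sum_(f <- developments) copy_arc_count D f u v)%N =
  (\sum_(a <- D) \sum_(y | y != 0%R) \sum_t
     ((develop y t a.1 == u) && (develop y t a.2 == v)))%N.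
Proof.
rewrite big_map big_enum /=.
rewrite (eq_bigl (fun p => (p.1 != 0) && xpredT p.2)) => [|p]; last by rewrite andbT.
rewrite -(pair_big (fun y : 'I_n.+1 => y != 0) xpredT
                   (fun y t => copy_arc_count D (develop y t) u v)) /=.
under eq_bigr => y _ do under eq_bigr => t _ do rewrite /copy_arc_count -sum_bool_count.
under eq_bigr => y _ do rewrite exchange_big /=.
by rewrite exchange_big.
Qed.

Theorem develop_decomposition : has_decomposition (@Kstar n.+1 s.+1) D.
Proof.
case/and3P: labelling => arcs_2nat diffs_once _.
exists developments; split.
  apply/allP => f /mapP[p]; rewrite mem_enum => p1_neq0 ->.
  exact/injectiveP/develop_inj.
move=> u v; rewrite developments_arc_count.
rewrite (eq_big_seq (fun a => ((u.1 != v.1) && (Q a.2 - Q a.1 == v.2 - u.2) : nat))).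
  under eq_bigr => a _ do rewrite -mulnb.
  by rewrite -big_distrr /= sum_bool_count (eqP (allP diffs_once _ (mem_enum _ _))) muln1.
by move=> a /(allP arcs_2nat)/develop_arc_count.
Qed.

End CyclicDevelopment.

Definition D_part (i : nat) (j : 'I_7) : int :=
  nth 0 (if i == 5 then [:: 0; 1; 2; 1; 2; 3; 2] else [:: 0; 1; 2; 3; 4; 3; 2]) j.

Definition D_position (i : nat) (j : 'I_7) : 'I_7 :=
  inZp (nth 0 (match i with
               | 1 => [:: 0; 0; 1; 3; 1; 4; 3]
               | 2 => [:: 0; 1; 0; 2; 0; 3; 3]
               | 3 => [:: 0; 1; 3; 2; 0; 3; 0]
               | 4 => [:: 0; 1; 1; 3; 2; 5; 2]
               | 5 => [:: 0; 1; 0; 0; 2; 5; 3]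
               | 6 => [:: 0; 0; 1; 3; 6; 5; 2]
               | 7 => [:: 0; 0; 1; 3; 2; 5; 3]
               | _ => [:: 0; 0; 1; 3; 2; 5; 2]
               end)%N j).

(* [inord] and [enum 'I_n] are defined through [insub], which is blocked by
   the opaque [idP]; the next two lemmas restate them so that [vm_compute] can
   check the labellings. *)
Lemma ar_inZp a b : (a < 7)%N -> (b < 7)%N -> ar a b = (inZp a, inZp b).
Proof. by move=> a_lt7 b_lt7; congr pair; apply: val_inj; rewrite /= inordK ?modn_small. Qed.

Lemma enum_ord_inZp n : enum 'I_n.+1 = map inZp (iota 0 n.+1).
Proof.
apply: (inj_map val_inj); rewrite val_enum_ord -map_comp.
by apply/esym/map_id_in => m; rewrite mem_iota /= => /modn_small.
Qed.

Lemma D_cyclic_labelling i : (1 <= i <= 8)%N ->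
  cyclic_labelling (D_arcs i) (D_part i) (D_position i).
Proof.
case/andP; case: i => [|[|[|[|[|[|[|[|[|i]]]]]]]]] // _ _;
  by rewrite /D_arcs !ar_inZp // /cyclic_labelling !enum_ord_inZp; vm_compute.
Qed.

Local Close Scope ring_scope.

(* The construction works for every odd number of parts, so [hx] is unused. *)
Theorem lemma3p4 (x i : nat) (hx : 3 <= x) (hi1 : 1 <= i) (hi8 : i <= 8) :
  has_decomposition (@Kstar (2 * x + 1) 7) (D_arcs i).
Proof.
rewrite addn1; apply: develop_decomposition (D_cyclic_labelling _).
  by rewrite /= oddM.
by rewrite hi1 hi8.
Qed.
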